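(* Let $G$ be a group with generating set $Y$. Let $S=\{x_0,\dots,x_m\}$ and $T=\{y_0,\dots,y_n\}$ be subsets of $Y$ with $x_0=y_0$. Assume (i) $[x_i,y_j]=1$ for $1\le i\le m$ and $1\le j\le n$, and (ii) $\langle y_0,y_1,\dots,y_n\rangle=\langle y_0y_1\cdots y_n\rangle\times\langle y_1,\dots,y_n\rangle$ (internal direct product). Then $[x_i,\langle y_0,\dots,y_n\rangle^2]=1$ for $1\le i\le m$, and $[y_j,\langle x_0,\dots,x_m\rangle^2]=1$ for $1\le j\le n$.
   Context: Conventions: $[x,y]=x^{-1}y^{-1}xy$; for a subgroup $H$, $H^2=[H,H]$ is its commutator subgroup; $[a,H]=1$ means $a$ commutes with every element of $H$. *)

From Stdlib Require Import Arith Lia.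

Record group := Group {
  carrier :> Type;
  gmul : carrier -> carrier -> carrier;
  ginv : carrier -> carrier;
  gone : carrier;
  gmulA : forall a b c, gmul a (gmul b c) = gmul (gmul a b) c;
  gmul1 : forall a, gmul gone a = a;
  gmulV : forall a, gmul (ginv a) a = gone
}.

Arguments gmul {g}.
Arguments ginv {g}.
Arguments gone {g}.

Section Defs.
Variable G : group.

Definition comm (x y : G) : G := gmul (gmul (ginv x) (ginv y)) (gmul x y).

Definition is_subgroup (H : G -> Prop) : Prop :=
  H gone /\ (forall a b, H a -> H b -> H (gmul a b)) /\ (forall a, H a -> H (ginv a)).

Definition gen (A : G -> Prop) : G -> Prop :=
  fun g => forall H, is_subgroup H -> (forall a, A a -> H a) -> H g.

(* H^2 = [H,H], the commutator subgroup *)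
Definition derived (H : G -> Prop) : G -> Prop :=
  gen (fun g => exists a b, H a /\ H b /\ g = comm a b).

Definition centralizes (a : G) (H : G -> Prop) : Prop :=
  forall h, H h -> comm a h = gone.

Definition normal_in (B A : G -> Prop) : Prop :=
  forall a b, A a -> B b -> B (gmul (ginv a) (gmul b a)).

Definition inner_direct (A B C : G -> Prop) : Prop :=
  is_subgroup A /\ is_subgroup B /\ is_subgroup C /\
  (forall b, B b -> A b) /\ (forall c, C c -> A c) /\
  normal_in B A /\ normal_in C A /\
  (forall g, B g -> C g -> g = gone) /\
  (forall a, A a -> exists b c, B b /\ C c /\ a = gmul b c).

Fixpoint prod_upto (y : nat -> G) (n : nat) : G :=
  match n with
  | 0 => y 0
  | S k => gmul (prod_upto y k) (y (S k))
  end.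

End Defs.

Arguments comm {G}.
Arguments is_subgroup {G}.
Arguments gen {G}.
Arguments derived {G}.
Arguments centralizes {G}.
Arguments inner_direct {G}.
Arguments prod_upto {G}.

(** Put H = ⟨y_0, ..., y_n⟩ = B × K with B = ⟨y_0 y_1 ⋯ y_n⟩ and K = ⟨y_1, ..., y_n⟩.
    If every element of a set A factors as z w with z in a subgroup Z and w in an
    abelian group W centralizing Z, then [z w, z' w'] = [z, z'], so A^2 ≤ Z.
    Applied to H = K B this gives H^2 ≤ K, which x_1, ..., x_m centralize.
    For X = ⟨x_0, ..., x_m⟩ write q = y_1 ⋯ y_n ∈ K: then x_0 = y_0 = (y_0 q) q^-1
    with y_0 q ∈ B, so X ≤ C(K) ⟨q⟩ and hence X^2 ≤ C(K), which y_1, ..., y_n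
    centralize. *)
From Stdlib Require Import Arith Lia.

Local Notation "a ** b" := (gmul a b) (at level 40, left associativity).

Section GroupLaws.
Context {G : group}.
Implicit Types a b c : G.

Lemma mulgV a : a ** ginv a = gone.
Proof.
  rewrite <- (gmul1 G (a ** ginv a)), <- (gmulV G (a ** ginv a)) at 1.
  rewrite <- !gmulA, (gmulA G (ginv a) a), gmulV, gmul1.
  apply gmulV.
Qed.

Lemma mulg1 a : a ** gone = a.
Proof. rewrite <- (gmulV G a), gmulA, mulgV. apply gmul1. Qed.

Lemma invg_unique a b : a ** b = gone -> b = ginv a.
Proof.
  intro Hab. rewrite <- (gmul1 G b), <- (gmulV G a), <- gmulA, Hab. apply mulg1.
Qed.

Lemma invgK a : ginv (ginv a) = a.
Proof. symmetry. apply invg_unique, gmulV. Qed.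

Lemma invgM a b : ginv (a ** b) = ginv b ** ginv a.
Proof.
  symmetry. apply invg_unique.
  rewrite !gmulA, <- (gmulA G a b), mulgV, mulg1. apply mulgV.
Qed.

Definition commute a b := a ** b = b ** a.

Lemma comm_eq1 a b : comm a b = gone <-> commute a b.
Proof.
  unfold comm, commute. split; intro H.
  - apply invg_unique in H. rewrite H, invgM, !invgK. reflexivity.
  - rewrite H, !gmulA, <- (gmulA G (ginv a) (ginv b) b), gmulV, mulg1.
    apply gmulV.
Qed.

Lemma commute_sym a b : commute a b -> commute b a.
Proof. unfold commute. auto. Qed.

Lemma commute1 a : commute a gone.
Proof. unfold commute. rewrite mulg1, gmul1. reflexivity. Qed.

Lemma commuteM a b c : commute a b -> commute a c -> commute a (b ** c).
Proof.
  unfold commute. intros Hb Hc. rewrite gmulA, Hb, <- gmulA, Hc, gmulA. reflexivity.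
Qed.

Lemma commuteV a b : commute a b -> commute a (ginv b).
Proof.
  unfold commute. intro H.
  rewrite <- (mulg1 (ginv b ** a)), <- (mulgV b), !gmulA.
  rewrite <- (gmulA G (ginv b) a b), H, gmulA, gmulV, gmul1. reflexivity.
Qed.

(* Both sides equal w^-1 [z1, z2] w with w = w1 w2. *)
Lemma comm_mul_central (z1 z2 w1 w2 : G) :
  commute w1 z1 -> commute w1 z2 -> commute w2 z1 -> commute w2 z2 -> commute w1 w2 ->
  comm (z1 ** w1) (z2 ** w2) = comm z1 z2.
Proof.
  intros c11 c12 c21 c22 cw.
  assert (Hw : forall z, commute w1 z -> commute w2 z -> commute (w1 ** w2) z).
  { intros z h1 h2. apply commute_sym, commuteM; apply commute_sym; assumption. }
  assert (Cw : commute (w1 ** w2) (comm z1 z2)).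
  { unfold comm. apply commuteM; apply commuteM; apply Hw; try apply commuteV; assumption. }
  assert (E12 : (z1 ** w1) ** (z2 ** w2) = (z1 ** z2) ** (w1 ** w2)).
  { rewrite !gmulA, <- (gmulA G z1 w1 z2), c12, gmulA. reflexivity. }
  assert (E21 : (z2 ** w2) ** (z1 ** w1) = (z2 ** z1) ** (w1 ** w2)).
  { rewrite !gmulA, <- (gmulA G z2 w2 z1), c21, gmulA.
    rewrite <- (gmulA G (z2 ** z1) w2 w1), <- cw, gmulA. reflexivity. }
  unfold comm at 1.
  rewrite <- invgM, E12, E21, (invgM (z2 ** z1)), (invgM z2 z1).
  replace (ginv (w1 ** w2) ** (ginv z1 ** ginv z2) ** ((z1 ** z2) ** (w1 ** w2)))
    with (ginv (w1 ** w2) ** (comm z1 z2 ** (w1 ** w2)))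
    by (unfold comm; rewrite !gmulA; reflexivity).
  rewrite <- Cw, gmulA, gmulV. apply gmul1.
Qed.

End GroupLaws.

Section Subgroups.
Context {G : group}.
Implicit Types A B Z W : G -> Prop.

Definition cent A : G -> Prop := fun g => forall a, A a -> commute a g.

Definition setmul Z W : G -> Prop := fun g => exists z w, Z z /\ W w /\ g = z ** w.

Lemma gen_subgroup A : is_subgroup (gen A).
Proof.
  split; [|split].
  - intros H [H1 _] _. exact H1.
  - intros a b Ha Hb H sH HA. pose proof sH as [_ [HM _]]. apply HM; [apply Ha | apply Hb]; assumption.
  - intros a Ha H sH HA. pose proof sH as [_ [_ HV]]. apply HV, Ha; assumption.
Qed.

Lemma gen_in A a : A a -> gen A a.
Proof. intros Ha H _ HA. auto. Qed.

Lemma gen_min A (H : G -> Prop) :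
  is_subgroup H -> (forall a, A a -> H a) -> forall g, gen A g -> H g.
Proof. intros sH HA g Hg. exact (Hg H sH HA). Qed.

Lemma cent_subgroup A : is_subgroup (cent A).
Proof.
  split; [|split]; unfold cent.
  - intros a _. apply commute1.
  - intros b c Hb Hc a Ha. apply commuteM; auto.
  - intros b Hb a Ha. apply commuteV; auto.
Qed.

Lemma commute_gen A B :
  (forall a b, A a -> B b -> commute a b) ->
  forall a b, gen A a -> gen B b -> commute a b.
Proof.
  intros AB a b Ha Hb.
  assert (HA : cent B a).
  { revert a Ha. apply gen_min; [apply cent_subgroup|].
    intros a Ha b' Hb'. apply commute_sym; auto. }
  assert (Hb' : cent (fun g => g = a) b).
  { revert b Hb. apply gen_min; [apply cent_subgroup|].
    intros b Hb a' ->. apply commute_sym, HA, Hb. }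
  apply Hb'. reflexivity.
Qed.

Lemma cyclic_commute (s a b : G) :
  gen (fun g => g = s) a -> gen (fun g => g = s) b -> commute a b.
Proof. apply commute_gen. intros a' b' -> ->. reflexivity. Qed.

Lemma setmul_subgroup Z W :
  is_subgroup Z -> is_subgroup W -> (forall z w, Z z -> W w -> commute z w) ->
  is_subgroup (setmul Z W).
Proof.
  intros [Z1 [ZM ZV]] [W1 [WM WV]] ZW. split; [|split].
  - exists gone, gone. repeat split; auto. rewrite mulg1. reflexivity.
  - intros a b [z [w [Hz [Hw ->]]]] [z' [w' [Hz' [Hw' ->]]]].
    exists (z ** z'), (w ** w'). repeat split; auto.
    rewrite !gmulA, <- (gmulA G z w z'), <- (ZW z' w Hz' Hw), gmulA. reflexivity.
  - intros a [z [w [Hz [Hw ->]]]].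
    exists (ginv z), (ginv w). repeat split; auto.
    rewrite invgM. apply commuteV, commute_sym, commuteV, ZW; assumption.
Qed.

Lemma derived_sub_setmul A Z W :
  is_subgroup Z ->
  (forall z w, Z z -> W w -> commute z w) ->
  (forall w w', W w -> W w' -> commute w w') ->
  (forall a, A a -> setmul Z W a) ->
  forall g, derived A g -> Z g.
Proof.
  intros sZ ZW Wab AZW. apply gen_min; [exact sZ|].
  intros c [a [b [Ha [Hb ->]]]].
  destruct (AZW a Ha) as [z1 [w1 [Hz1 [Hw1 ->]]]].
  destruct (AZW b Hb) as [z2 [w2 [Hz2 [Hw2 ->]]]].
  rewrite comm_mul_central by (first [apply Wab; assumption | apply commute_sym, ZW; assumption]).
  destruct sZ as [_ [ZM ZV]]. unfold comm. auto.
Qed.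

Lemma inner_direct_commute A B C b c :
  inner_direct A B C -> B b -> C c -> commute b c.
Proof.
  intros [_ [[_ [BM BV]] [[_ [CM CV]] [BA [CA [nB [nC [BC _]]]]]]]] Hb Hc.
  apply comm_eq1, BC.
  - replace (comm b c) with (ginv b ** (ginv c ** (b ** c)))
      by (unfold comm; rewrite !gmulA; reflexivity).
    apply BM, nB; auto.
  - replace (comm b c) with ((ginv b ** (ginv c ** b)) ** c)
      by (unfold comm; rewrite !gmulA; reflexivity).
    apply CM; [apply nC|]; auto.
Qed.

Lemma inner_direct_setmul A B C :
  inner_direct A B C -> forall a, A a -> setmul C B a.
Proof.
  intros hdir a Ha. pose proof hdir as (_ & _ & _ & _ & _ & _ & _ & _ & dec).
  destruct (dec a Ha) as [b [c [Hb [Hc ->]]]].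
  exists c, b. repeat split; auto.
  exact (inner_direct_commute A B C b c hdir Hb Hc).
Qed.

Lemma derived_inner_direct_cyclic_sub A C (s : G) :
  inner_direct A (gen (fun g => g = s)) C -> forall g, derived A g -> C g.
Proof.
  intro hdir. pose proof hdir as (_ & _ & sC & _).
  apply (derived_sub_setmul _ C (gen (fun g => g = s)) sC).
  - intros c b Hc Hb. apply commute_sym, (inner_direct_commute _ _ _ _ _ hdir); assumption.
  - apply cyclic_commute.
  - apply (inner_direct_setmul _ _ _ hdir).
Qed.

Lemma derived_gen_sub_cent K X (q : G) :
  is_subgroup K -> K q ->
  (forall a, X a -> setmul (cent K) (gen (fun g => g = q)) a) ->
  forall g, derived (gen X) g -> cent K g.
Proof.
  intros sK Kq HX.
  assert (cKQ : forall z w, cent K z -> gen (fun g => g = q) w -> commute z w).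
  { intros z w Hz Hw. apply commute_sym, Hz.
    revert w Hw. apply gen_min; [exact sK|]. intros w ->. exact Kq. }
  apply (derived_sub_setmul _ (cent K) (gen (fun g => g = q)));
    [apply cent_subgroup | exact cKQ | apply cyclic_commute |].
  apply gen_min; [|exact HX].
  apply setmul_subgroup; [apply cent_subgroup | apply gen_subgroup | exact cKQ].
Qed.

End Subgroups.

Fixpoint tail_prod {G : group} (y : nat -> G) (n : nat) : G :=
  match n with 0 => gone | S k => tail_prod y k ** y (S k) end.

Lemma prod_upto_tail {G : group} (y : nat -> G) n :
  prod_upto y n = y 0 ** tail_prod y n.
Proof.
  induction n as [|n IH]; simpl.
  - symmetry. apply mulg1.
  - rewrite IH, gmulA. reflexivity.
Qed.

Lemma tail_prod_gen {G : group} (y : nat -> G) n k : k <= n ->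
  gen (fun g => exists j, 1 <= j <= n /\ g = y j) (tail_prod y k).
Proof.
  pose proof (gen_subgroup (fun g => exists j, 1 <= j <= n /\ g = y j)) as [K1 [KM _]].
  induction k as [|k IH]; intro Hk; simpl.
  - exact K1.
  - apply KM; [apply IH; lia|]. apply gen_in. exists (S k). split; [lia|reflexivity].
Qed.

Theorem mainTheorem10 (G : group) (Y : G -> Prop) (m n : nat)
  (x y : nat -> G)
  (hY : forall g : G, gen Y g)
  (hxY : forall i, i <= m -> Y (x i))
  (hyY : forall j, j <= n -> Y (y j))
  (h0 : x 0 = y 0)
  (hcomm : forall i j, 1 <= i <= m -> 1 <= j <= n -> comm (x i) (y j) = gone)
  (hdir : inner_direct
            (gen (fun g => exists j, j <= n /\ g = y j))
            (gen (fun g => g = prod_upto y n))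
            (gen (fun g => exists j, 1 <= j <= n /\ g = y j))) :
  (forall i, 1 <= i <= m ->
     centralizes (x i) (derived (gen (fun g => exists j, j <= n /\ g = y j)))) /\
  (forall j, 1 <= j <= n ->
     centralizes (y j) (derived (gen (fun g => exists i, i <= m /\ g = x i)))).
Proof.
  set (K := gen (fun g => exists j, 1 <= j <= n /\ g = y j)) in *.
  pose proof hdir as (_ & _ & sK & _).
  assert (xK : forall i, 1 <= i <= m -> forall k, K k -> commute (x i) k).
  { intros i Hi k Hk.
    apply (commute_gen (fun g => g = x i) (fun g => exists j, 1 <= j <= n /\ g = y j));
      [|apply gen_in; reflexivity|exact Hk].
    intros a b -> [j [Hj ->]]. apply comm_eq1, hcomm; assumption. }
  split.
  - intros i Hi h Hh. apply comm_eq1, (xK i Hi).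
    exact (derived_inner_direct_cyclic_sub _ _ _ hdir h Hh).
  - intros j Hj h Hh. apply comm_eq1.
    apply (derived_gen_sub_cent K (fun g => exists i, i <= m /\ g = x i) (tail_prod y n) sK
             (tail_prod_gen y n n (le_n n))) with (g := h);
      [|exact Hh|apply gen_in; exists j; split; [assumption|reflexivity]].
    intros a [[|i] [Hi ->]].
    + exists (prod_upto y n), (ginv (tail_prod y n)). repeat split.
      * intros k Hk. apply commute_sym, (inner_direct_commute _ _ _ _ _ hdir); [apply gen_in|]; auto.
      * apply gen_subgroup, gen_in. reflexivity.
      * rewrite h0, prod_upto_tail, <- gmulA, mulgV, mulg1. reflexivity.
    + exists (x (S i)), gone. repeat split.
      * intros k Hk. apply commute_sym, xK; [lia|assumption].
      * apply gen_subgroup.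
      * rewrite mulg1. reflexivity.
Qed.
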